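(* Let $\alpha \in [0,1)$ and $\mathbf{x} \in \Omega$ be such that $\mathcal{F}(\{\mathbf{x}\}, \alpha)$ is nonempty. Then the highest value $B(\mathbf{x})$ assigned to $\mathbf{x}$ by any valid bound $B$, denoted $B^*(\mathbf{x})$, satisfies $$B^*(\mathbf{x}) = \min\{E[F] : F \in \mathcal{F}(\{\mathbf{x}\}, \alpha)\}.$$
   Context: Fix integers $m \ge 2$, $n \ge 1$ and reals $S_{\min} < S_{\max}$; $S = \{S_0,\dots,S_{m-1}\}$ with $S_k = S_{\min} + k\frac{S_{\max}-S_{\min}}{m-1}$. $\mathcal{F}$ is the set of probability distributions on $S$, identified with the probability simplex in $\mathbb{R}^m$ with the Euclidean topology; $E[F]$ is the mean. $\Omega$ is the set of samples of size $n$ from $S$, identified with their sorted versions. For $F \in \mathcal{F}$, $\mathbf{X}$ denotes a sample of $n$ i.i.d. draws from $F$, and $P_F[\Omega']$ is the probability that (sorted) $\mathbf{X}$ lies in $\Omega' \subseteq \Omega$. $\mathcal{G}(\Omega',\alpha) = \{F : P_F[\Omega'] > \alpha\}$ and $\mathcal{F}(\Omega',\alpha)$ is its closure in $\mathcal{F}$. A bound is a function $B : \Omega \to \mathbb{R}$; it is valid (at level $1-\alpha$) if $P_F[B(\mathbf{X}) \le E[F]] \ge 1 - \alpha$ for every $F \in \mathcal{F}$. *)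

From HB Require Import structures.
From mathcomp Require Import all_boot all_order all_algebra.
From mathcomp Require Import all_classical all_reals all_analysis.
Set Implicit Arguments. Unset Strict Implicit. Unset Printing Implicit Defensive.
Import Order.TTheory GRing.Theory Num.Theory.
Import numFieldNormedType.Exports.
Local Open Scope classical_set_scope.
Local Open Scope ring_scope.

Section Defs.
Variables (R : realType) (m n : nat) (Smin Smax : R).

Definition Spt (k : 'I_m) : R := Smin + k%:R * ((Smax - Smin) / (m.-1)%:R).

(* distributions on S, as points of the probability simplex in R^m *)
Definition simplex : set 'rV[R]_m :=
  [set F | (forall k, 0 <= F ord0 k) /\ \sum_(k < m) F ord0 k = 1].

Definition mean (F : 'rV[R]_m) : R := \sum_(k < m) F ord0 k * Spt k.

(* order on indices (equivalently on support values, as Smin < Smax) *)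
Definition ordle : rel 'I_m := fun i j => (i <= j)%N.

(* Omega: sorted samples of size n (as index tuples into S) *)
Definition Omega := {t : n.-tuple 'I_m | sorted ordle t}.

Lemma ordle_total : total ordle.
Proof. by move=> i j; rewrite /ordle leq_total. Qed.

Definition sort_sample (d : n.-tuple 'I_m) : Omega :=
  exist _ (sort_tuple ordle d) (sort_sorted ordle_total d).

Definition draw_prob (F : 'rV[R]_m) (d : n.-tuple 'I_m) : R :=
  \prod_(i < n) F ord0 (tnth d i).

Definition probF (F : 'rV[R]_m) (O' : {set Omega}) : R :=
  \sum_(d : n.-tuple 'I_m | sort_sample d \in O') draw_prob F d.

Definition Gset (O' : {set Omega}) (alpha : R) : set 'rV[R]_m :=
  [set F | simplex F /\ alpha < probF F O'].

Definition Fset (O' : {set Omega}) (alpha : R) : set 'rV[R]_m :=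
  closure (Gset O' alpha) `&` simplex.

Definition valid_bound (alpha : R) (B : Omega -> R) : Prop :=
  forall F, simplex F ->
    1 - alpha <= \sum_(d : n.-tuple 'I_m | B (sort_sample d) <= mean F) draw_prob F d.

End Defs.

From HB Require Import structures.
From mathcomp Require Import all_boot all_order all_algebra.
From mathcomp Require Import all_classical all_reals all_analysis.
Set Implicit Arguments. Unset Strict Implicit. Unset Printing Implicit Defensive.
Import Order.TTheory GRing.Theory Num.Theory.
Import numFieldNormedType.Exports.
Local Open Scope classical_set_scope.
Local Open Scope ring_scope.

(* F({x}, alpha) is a closed subset of the simplex, hence compact, so the
   continuous mean attains its minimum there at some c.  The bound equal to
   E[c] at x and to S_min elsewhere is valid: a distribution F with
   E[F] < E[c] lies outside G({x}, alpha), so B(X) <= E[F] fails at most on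
   {X = x}, of probability <= alpha.  Conversely, if a valid B had
   B(x) > E[c], then by continuity some F in G({x}, alpha) has E[F] < B(x);
   the event B(X) <= E[F] then misses {X = x}, whose probability exceeds
   alpha. *)

Lemma continuous_sum (K : numFieldType) (T : topologicalType) (I : Type)
    (r : seq I) (P : pred I) (f : I -> T -> K) :
  (forall i, continuous (f i)) ->
  continuous (fun t => \sum_(i <- r | P i) f i t).
Proof.
move=> fc; elim: r => [|i r IH].
  by under eq_fun do rewrite big_nil; exact: cst_continuous.
under eq_fun do rewrite big_cons.
by case: (P i) => // t; apply: cvgD; [exact: fc | exact: IH].
Qed.

Lemma ler_sum_subpred (K : numDomainType) (I : finType) (P Q : pred I)
    (w : I -> K) :
  (forall i, 0 <= w i) -> (forall i, P i -> Q i) ->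
  \sum_(i | P i) w i <= \sum_(i | Q i) w i.
Proof.
move=> w_ge0 PQ; rewrite [leRHS](bigID P) /= -[leLHS]addr0.
have -> : \sum_(i | P i) w i = \sum_(i | Q i && P i) w i.
  by apply: eq_bigl => i; case: (boolP (P i)) => [/PQ -> | _]; rewrite ?andbF.
by rewrite lerD ?sumr_ge0.
Qed.

Section Simplex.
Variables (R : realType) (m : nat).

Lemma simplex_closed : closed (@simplex R m).
Proof.
have -> : @simplex R m =
    \bigcap_(k in setT) ((fun F : 'rV[R]_m => F ord0 k) @^-1` [set y | 0 <= y])
    `&` ((fun F : 'rV[R]_m => \sum_(k < m) F ord0 k) @^-1` [set 1]).
  by apply/seteqP; split=> F [F_ge0 F_sum]; split=> // k *; apply: F_ge0.
apply: closedI.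
  apply: closed_bigI => k _; apply: preimage_closed; last exact: closed_ge.
  by move=> F _; exact: coord_continuous.
apply: preimage_closed; last exact: closed_eq.
by move=> F _; apply: continuous_sum => k; exact: coord_continuous.
Qed.

Lemma simplex_coord_itv (F : 'rV[R]_m) k :
  simplex F -> `[0, 1]%classic (F ord0 k).
Proof.
case=> F_ge0 F_sum /=; rewrite in_itv /= F_ge0 /= -F_sum (bigD1 k) //= lerDl.
by apply: sumr_ge0 => j _; exact: F_ge0.
Qed.

Lemma compact_in_simplex (A : set 'rV[R]_m) :
  closed A -> A `<=` @simplex R m -> compact A.
Proof.
move=> A_closed A_simplex.
have cube_compact := @rV_compact R m (fun=> `[0, 1]%classic)
  (fun=> @segment_compact R 0 1).
apply: (subclosed_compact A_closed cube_compact).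
by move=> F /A_simplex F_simplex k; exact: simplex_coord_itv.
Qed.

Lemma Fset_compact (n : nat) (O' : {set Omega m n}) (alpha : R) :
  compact (Fset O' alpha).
Proof.
apply: compact_in_simplex; last by move=> F [].
by apply: closedI; [exact: closed_closure | exact: simplex_closed].
Qed.

Lemma Gset_sub_Fset (n : nat) (O' : {set Omega m n}) (alpha : R) :
  Gset O' alpha `<=` Fset O' alpha.
Proof. by move=> F GF; split; [exact: subset_closure | case: GF]. Qed.

End Simplex.

Section Mean.
Variables (R : realType) (m : nat) (Smin Smax : R).

Lemma mean_continuous : continuous (mean Smin Smax : 'rV[R]_m -> R).
Proof.
apply: continuous_sum => k F.
exact: (continuousM (@coord_continuous R 1 m ord0 k F)
  (@cst_continuous _ _ (Spt Smin Smax k) F)).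
Qed.

Lemma mean_ge_Smin (F : 'rV[R]_m) :
  Smin <= Smax -> simplex F -> Smin <= mean Smin Smax F.
Proof.
move=> le_SS [F_ge0 F_sum].
rewrite -[leLHS]mul1r -F_sum mulr_suml; apply: ler_sum => k _.
by rewrite ler_wpM2l // /Spt lerDl mulr_ge0 // divr_ge0 // subr_ge0.
Qed.

End Mean.

Section Sampling.
Variables (R : realType) (m n : nat) (F : 'rV[R]_m).
Hypothesis F_simplex : simplex F.

Lemma draw_prob_ge0 (d : n.-tuple 'I_m) : 0 <= draw_prob F d.
Proof. by case: F_simplex => F_ge0 _; apply: prodr_ge0 => i _. Qed.

Lemma sum_draw_prob : \sum_(d : n.-tuple 'I_m) draw_prob F d = 1.
Proof.
case: F_simplex => _ F_sum.
(* Expand (sum_k F_k)^n = 1 over the functions 'I_n -> 'I_m, i.e. the draws. *)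
have : \prod_(i < n) \sum_(k < m) F ord0 k = 1 by rewrite F_sum big1.
rewrite bigA_distr_bigA /= => <-.
rewrite (reindex (fun f : {ffun 'I_n -> 'I_m} => [tuple f i | i < n])) /=.
  apply: eq_bigr => f _; apply: eq_bigr => i _.
  by rewrite tnth_mktuple.
exists (fun d => [ffun i => tnth d i]) => [f _ | d _].
  by apply/ffunP => i; rewrite ffunE tnth_mktuple.
by apply: eq_from_tnth => i; rewrite tnth_mktuple ffunE.
Qed.

Lemma probF_compl (O' : {set Omega m n}) :
  \sum_(d : n.-tuple 'I_m | sort_sample d \notin O') draw_prob F d =
  1 - probF F O'.
Proof.
rewrite -sum_draw_prob [\sum_d _](bigID (fun d => sort_sample d \in O')) /=.
by rewrite /probF addrAC subrr add0r.
Qed.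

End Sampling.

Section ValidBounds.
Variables (R : realType) (m n : nat) (Smin Smax : R).
Variables (alpha : R) (x : Omega m n).

Definition point_bound (v : R) (y : Omega m n) : R :=
  if y == x then v else Smin.

Lemma point_bound_valid (v : R) :
  0 <= alpha -> Smin <= Smax ->
  (forall F, Gset [set x] alpha F -> v <= mean Smin Smax F) ->
  valid_bound Smin Smax alpha (point_bound v).
Proof.
move=> alpha_ge0 le_SS v_min F F_simplex.
have Smin_le := mean_ge_Smin le_SS F_simplex.
have [le_v | lt_v] := leP v (mean Smin Smax F).
  rewrite (eq_bigl xpredT) ?sum_draw_prob ?lerBlDr ?lerDl // => d.
  by rewrite /point_bound; case: ifP.
have probx_le : probF F [set x] <= alpha.
  by rewrite leNgt; apply/negP => lt_alpha; move: lt_v; rewrite ltNge v_min.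
apply: (le_trans (lerB (lexx 1) probx_le)).
rewrite -probF_compl //; apply: ler_sum_subpred => d; first exact: draw_prob_ge0.
by rewrite inE /point_bound => /negbTE ->.
Qed.

Section FixedBound.
Variable B : Omega m n -> R.
Hypothesis B_valid : valid_bound Smin Smax alpha B.

Lemma valid_bound_le_mean_Gset F :
  Gset [set x] alpha F -> B x <= mean Smin Smax F.
Proof.
case=> F_simplex lt_alpha; rewrite leNgt; apply/negP => lt_Bx.
have := B_valid F_simplex; apply/negP; rewrite -ltNge.
apply: (@le_lt_trans _ _ (1 - probF F [set x])); last by rewrite ltrD2l ltrN2.
rewrite -probF_compl //; apply: ler_sum_subpred => d; first exact: draw_prob_ge0.
by rewrite inE; apply: contraTN => /eqP ->; rewrite -ltNge.
Qed.

Lemma valid_bound_le_mean_Fset F :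
  Fset [set x] alpha F -> B x <= mean Smin Smax F.
Proof.
pose above := @mean R m Smin Smax @^-1` [set y | B x <= y].
have above_closed : closed above.
  apply: preimage_closed; last exact: closed_ge.
  by move=> G _; exact: mean_continuous.
case=> GF _; have : closure above F.
  by apply: closureS GF => G /valid_bound_le_mean_Gset.
by rewrite -(closure_id above).1.
Qed.

End FixedBound.
End ValidBounds.

Theorem lemma6 (R : realType) (m n : nat) (Smin Smax : R)
  (hm : (2 <= m)%N) (hn : (1 <= n)%N) (hS : Smin < Smax)
  (alpha : R) (halpha : 0 <= alpha < 1) (x : Omega m n)
  (hne : Fset [set x] alpha !=set0) :
  exists v : R,
    (* v = B*(x): the highest value assigned to x by a valid bound *)
    ((exists B : Omega m n -> R, valid_bound Smin Smax alpha B /\ B x = v) /\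
     (forall B : Omega m n -> R, valid_bound Smin Smax alpha B -> B x <= v)) /\
    (* v = min { E[F] : F in F({x}, alpha) } *)
    ((exists F, Fset [set x] alpha F /\ mean Smin Smax F = v) /\
     (forall F, Fset [set x] alpha F -> v <= mean Smin Smax F)).
Proof.
have [c /set_mem Fc c_min] := compact_EVT_min hne (@Fset_compact R m n [set x] alpha)
  (continuous_subspaceT (@mean_continuous R m Smin Smax)).
have {}c_min F : Fset [set x] alpha F -> mean Smin Smax c <= mean Smin Smax F.
  by move=> FF; apply: c_min; exact: mem_set.
case/andP: halpha => alpha_ge0 _.
exists (mean Smin Smax c); split; last by split; [exists c | exact: c_min].
split; last by move=> B B_valid; exact: (valid_bound_le_mean_Fset B_valid Fc).
exists (point_bound Smin x (mean Smin Smax c)); split; last by rewrite /point_bound eqxx.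
apply: point_bound_valid => //; first exact: ltW.
by move=> F /Gset_sub_Fset; exact: c_min.
Qed.
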